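(* Let $f$ be a nonnegative locally integrable function on $\mathbb R$, $\lambda>0$, and let $\{I_i\}_{i=1}^m$ be a well-separated family of intervals such that for every $i$, $$\lambda\le\frac{\int_{I_i}f(y)\,dy}{|I_i|}\le2\lambda.$$ Then for every $1\le i\le m$ there exists $j_i\in[-50,50]\setminus\{0\}$ such that $$\Big|H\big(f\chi_{\bigcup_{i=1}^mI_i}\big)(x)\Big|\ge\frac\lambda8\qquad\text{for every }x\in\bigcup_{i=1}^mI_{i,j_i}.$$
   Context: $Hf(x)=\frac1\pi\lim_{\varepsilon\to0^+}\int_{|x-y|>\varepsilon}\frac{f(y)}{x-y}dy$. For an interval $I$ and an integer $j\in[-50,50]$, $I_j$ denotes the interval with $|I_j|=|I|$, $I_0=I$, and for $j\ne0$, $\mathrm{dist}(I_j,I)=(|j|-1)|I|$ with $I_j$ to the left of $I$ if $j<0$ and to the right if $j>0$; $I_{i,j}$ denotes $(I_i)_j$. A finite family of intervals $\{I_i\}$ is well-separated if the intervals $101I_i$ (same center, $101$ times the length) are pairwise disjoint. *)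

From HB Require Import structures.
From mathcomp Require Import all_boot all_order all_algebra.
From mathcomp Require Import all_classical all_reals all_analysis.
Set Implicit Arguments. Unset Strict Implicit. Unset Printing Implicit Defensive.
Import Order.TTheory GRing.Theory Num.Theory.
Import numFieldNormedType.Exports.
Local Open Scope classical_set_scope.
Local Open Scope ring_scope.

Section Defs.
Context {R : realType}.

Definition is_itv (I : R * R) : Prop := I.1 < I.2.
Definition itv_set (I : R * R) : set R := `]I.1, I.2[.
Definition itv_len (I : R * R) : R := I.2 - I.1.

(* I_j : same length, I_0 = I, dist(I_j, I) = (|j|-1)|I|, left for j<0,
   right for j>0; this is the translate of I by j|I|. *)
Definition itv_shift (I : R * R) (j : int) : R * R :=
  (I.1 + j%:~R * itv_len I, I.2 + j%:~R * itv_len I).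

Definition itv_dilate (c : R) (I : R * R) : R * R :=
  ((I.1 + I.2) / 2 - c * itv_len I / 2, (I.1 + I.2) / 2 + c * itv_len I / 2).

Definition well_separated (m : nat) (I : 'I_m -> R * R) : Prop :=
  forall i k : 'I_m, i != k ->
    itv_set (itv_dilate 101 (I i)) `&` itv_set (itv_dilate 101 (I k)) = set0.

Definition hilbert_trunc (g : R -> R) (eps x : R) : R :=
  pi^-1 * Rintegral lebesgue_measure [set y | eps < `|x - y|]
                                     (fun y => g y / (x - y)).

Definition hilbert_pv (g : R -> R) (x L : R) : Prop :=
  hilbert_trunc g eps x @[eps --> 0^'+] --> L.

End Defs.

(* Fix I = ]a, b[ of length L and write f 1_U = h + g with h = f 1_I; by
   well-separation g vanishes on 101 I = ]a - 50 L, b + 50 L[.  Away from the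
   support of h + g the principal value is the convergent integral
   (Q + P) / pi, where Q and P are the Cauchy integrals of h and g.  The mass
   of h gives Q >= lambda/2 on I_1, Q <= -lambda/2 on I_-1 and
   |Q| <= 2 lambda/49 on I_50 and I_-50, while P is nonincreasing on 101 I
   since g >= 0 lives outside it.  Hence one of the shifts 1, -1, 50, -50
   works unless P (b + L) is very negative, P (a - L) very positive and
   P (a - 49 L) - P (b + 49 L) small; but comparing the kernels pointwise,
   33 (P (a - L) - P (b + L)) <= P (a - 49 L) - P (b + 49 L), and pi < 7/2
   leaves enough room for a contradiction. *)

From HB Require Import structures.
From mathcomp Require Import all_boot all_order all_algebra.
From mathcomp Require Import all_classical all_reals all_analysis.
From mathcomp Require Import ring lra measurable_realfun.
Import Order.TTheory GRing.Theory Num.Theory.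
Import numFieldNormedType.Exports.
Local Open Scope classical_set_scope.
Local Open Scope ring_scope.
Set Implicit Arguments. Unset Strict Implicit. Unset Printing Implicit Defensive.

Section pi_bound.
Context {R : realType}.

Lemma ltr_expr_div_fact2 (x : R) (n : nat) : 0 < x -> x ^+ 2 < 6 -> (0 < n)%N ->
  x ^+ n.+2 / (n.+2)`!%:R < x ^+ n / n`!%:R.
Proof.
move=> x0 x6 n0; rewrite !factS !natrM !exprS mulrA -expr2.
have F0 : (0 : R) < n`!%:R by rewrite ltr0n fact_gt0.
have n1 : (2 : R) <= n.+1%:R by rewrite ler_nat ltnS.
have -> : (n.+2)%:R = n.+1%:R + 1 :> R by rewrite -natr1.
have X0 : 0 < x ^+ n by rewrite exprn_gt0.
move: F0 n1 X0; set F := n`!%:R; set a := n.+1%:R; set X := x ^+ n => F0 n1 X0.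
rewrite ltr_pdivrMr ?mulr_gt0 //; last lra.
have -> : X / F * ((a + 1) * (a * F)) = X * ((a + 1) * a) by field; lra.
rewrite mulrC ltr_pM2l //; nra.
Qed.

Lemma cos_7_4_lt0 : cos (7 / 4 : R) < 0.
Proof.
rewrite -(opprK (cos _)) oppr_lt0; have /cvgN h := @cvg_cos_coeff' R (7 / 4).
rewrite -(cvg_lim (@Rhausdorff R) h).
apply: (@lt_trans _ _ (\sum_(0 <= i < 3) - cos_coeff' (7 / 4 : R) i)).
  do 3 rewrite big_nat_recl//; rewrite big_nil addr0 /cos_coeff' /=.
  rewrite !factS fact0 -!exprnP /=; lra.
rewrite -seriesN lt_sum_lim_series //; first by move/cvgP in h; rewrite seriesN.
move=> d; rewrite /cos_coeff'.
have -> : (3 + d.*2.+1).*2 = ((3 + d.*2).*2).+2 by rewrite addnS doubleS.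
have -> : (-1 : R) ^ (3 + d.*2)%N = -1.
  by rewrite -exprnP -signr_odd oddD odd_double /= expr1.
have -> : (-1 : R) ^ (3 + d.*2.+1)%N = 1.
  by rewrite -exprnP -signr_odd oddD /= odd_double /= expr0.
rewrite !mulN1r !mul1r mulNr opprK subr_gt0.
by apply: ltr_expr_div_fact2 => //; lra.
Qed.

Lemma pi_lt_7_2 : pi < 7 / 2 :> R.
Proof.
suff : pi / 2 < 7 / 4 :> R by lra.
have pi2 := @pi_ge2 R.
by rewrite -ltr_cos ?cos_pihalf ?cos_7_4_lt0 // in_itv /=; apply/andP; split; lra.
Qed.

End pi_bound.

Section cauchy_integral.
Context {R : realType}.
Local Notation mu := (@lebesgue_measure R).
Implicit Types (phi : R -> R) (x : R).

Definition cauchy_integral phi x : R :=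
  Rintegral mu setT (fun y => phi y / (x - y)).

Lemma hilbert_pv_cauchy_integral phi x : (\forall y \near x, phi y = 0) ->
  hilbert_pv phi x (pi^-1 * cauchy_integral phi x).
Proof.
move=> /nbhs_ballP[d /= d0 phi0]; apply: cvg_near_cst; near=> e.
rewrite /hilbert_trunc Rintegral_mkcond; congr (_ * _).
apply: eq_Rintegral => y _; rewrite patchE; case: ifPn => // /negP ye.
rewrite phi0 ?mul0r // /ball /= ltNge; apply/negP => de; apply: ye.
rewrite inE /= (lt_le_trans _ de) //; near: e; exact: nbhs_right_lt.
Unshelve. all: by end_near. Qed.

Definition truncated_kernel x d y : R := (x - y) / Num.max ((x - y) ^+ 2) (d ^+ 2).

Lemma continuous_truncated_kernel x d : 0 < d -> continuous (truncated_kernel x d).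
Proof.
move=> d0 y; have cxy : continuous (fun y : R => x - y).
  by move=> z; apply: continuousB; [exact: cst_continuous|exact: id].
apply: (continuousM (s := fun y => x - y)
  (t := fun y => (Num.max ((x - y) ^+ 2) (d ^+ 2))^-1)); first exact: cxy.
apply: continuousV.
  by rewrite gt_eqF // lt_max; apply/orP; right; exact: exprn_gt0.
apply: (@continuous_max _ _ (fun y => (x - y) ^+ 2) (fun _ => d ^+ 2)).
  rewrite (_ : (fun y => (x - y) ^+ 2) = (fun y => x - y) \* (fun y => x - y)).
    by apply: continuousM; exact: cxy.
  by apply/funext => z; rewrite expr2.
exact: cst_continuous.
Qed.

Lemma normr_truncated_kernel_le x d y : 0 < d -> `|truncated_kernel x d y| <= d^-1.
Proof.
move=> d0; rewrite /truncated_kernel; set t := x - y; set M := Num.max _ _.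
have M1 : `|t| ^+ 2 <= M by rewrite real_normK ?num_real // le_max lexx.
have M2 : d ^+ 2 <= M by rewrite le_max lexx orbT.
have M0 : 0 < M by apply: lt_le_trans M2; rewrite exprn_gt0.
rewrite normrM normfV (gtr0_norm M0) ler_pdivrMr // -(ler_pM2l d0) mulrA divff ?gt_eqF //.
rewrite mul1r; have := sqr_ge0 (`|t| - d); nra.
Qed.

Lemma truncated_kernelE x d y : 0 < d -> d <= `|x - y| ->
  truncated_kernel x d y = (x - y)^-1.
Proof.
move=> d0 dxy; have xy0 : x - y != 0 by rewrite -normr_gt0 (lt_le_trans d0).
rewrite /truncated_kernel max_l; first by rewrite expr2 invfM mulrA divff ?mul1r.
by rewrite -(real_normK (num_real (x - y))) lerXn2r // ?nnegrE ltW.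
Qed.

Lemma integrable_cauchy_kernel phi x :
  mu.-integrable setT (EFin \o phi) -> (\forall y \near x, phi y = 0) ->
  mu.-integrable setT (EFin \o (fun y => phi y / (x - y))).
Proof.
move=> iphi /nbhs_ballP[d /= d0 phi0].
have mk := continuous_measurable_fun (@continuous_truncated_kernel x d d0).
have bk : [bounded truncated_kernel x d y | y in setT].
  exists d^-1; split; first exact: num_real.
  by move=> M dM y _; apply: le_trans (ltW dM); exact: normr_truncated_kernel_le.
have := integrableMl measurableT iphi mk bk.
apply: eq_integrable => // y _ /=.
have [xyd|dxy] := ltP `|x - y| d; first by rewrite phi0 ?mul0r ?mul0e.
by rewrite truncated_kernelE.
Qed.

Lemma integrableZr_EFin phi r : mu.-integrable setT (EFin \o phi) ->
  mu.-integrable setT (EFin \o (fun y => phi y * r)).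
Proof.
by move=> /(integrableZr measurableT r); apply: eq_integrable.
Qed.

Lemma integrableB_EFin phi psi : mu.-integrable setT (EFin \o phi) ->
  mu.-integrable setT (EFin \o psi) ->
  mu.-integrable setT (EFin \o (fun y => phi y - psi y)).
Proof.
move=> iphi ipsi; have := integrableB measurableT iphi ipsi.
by apply: eq_integrable => // y _ /=; rewrite EFinB.
Qed.

Lemma le_Rintegral_weighted (A : set R) phi k1 k2 :
  (forall y, 0 <= phi y) -> (forall y, ~ A y -> phi y = 0) ->
  mu.-integrable setT (EFin \o (fun y => phi y * k1 y)) ->
  mu.-integrable setT (EFin \o (fun y => phi y * k2 y)) ->
  (forall y, A y -> k1 y <= k2 y) ->
  Rintegral mu setT (fun y => phi y * k1 y) <= Rintegral mu setT (fun y => phi y * k2 y).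
Proof.
move=> phi0 phiA i1 i2 k12; apply: le_Rintegral => // y _.
have [Ay|nAy] := pselect (A y); first by rewrite ler_wpM2l ?k12.
by rewrite phiA // !mul0r.
Qed.

Lemma near_vanish_itv phi c e x : c < x < e ->
  (forall y, c < y < e -> phi y = 0) -> \forall y \near x, phi y = 0.
Proof.
move=> cxe phi0; near=> y; apply: phi0.
suff : y \in `]c, e[ by rewrite in_itv.
by near: y; apply: near_in_itvoo; rewrite in_itv.
Unshelve. all: by end_near. Qed.

Lemma cauchy_integral_antitone phi c e x1 x2 :
  (forall y, 0 <= phi y) -> mu.-integrable setT (EFin \o phi) ->
  (forall y, c < y < e -> phi y = 0) -> c < x1 -> x1 < x2 -> x2 < e ->
  cauchy_integral phi x2 <= cauchy_integral phi x1.
Proof.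
move=> phi0 iphi phice cx1 x12 x2e.
have near0 x : c < x < e -> \forall y \near x, phi y = 0.
  by move=> cxe; exact: near_vanish_itv cxe phice.
apply: (le_Rintegral_weighted (A := fun y => ~~ (c < y < e))) => //.
- by move=> y /negP/negPn; exact: phice.
- by apply: integrable_cauchy_kernel => //; apply: near0; apply/andP; split; lra.
- by apply: integrable_cauchy_kernel => //; apply: near0; apply/andP; split; lra.
move=> y; rewrite negb_and -!leNgt => /orP[yc|ey].
  by rewrite lef_pV2 ?posrE; lra.
by rewrite -[x1 - y]opprB -[x2 - y]opprB !invrN lerN2 lef_pV2 ?posrE; lra.
Qed.

End cauchy_integral.

(* Both sides are 99 L over a product of two distances; outside ]-51 L, 50 L[
   the far product is the smaller one. *)
Lemma kernel_difference_spread {R : realType} (s L : R) : 0 < L ->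
  50 * L <= s \/ s <= - (51 * L) ->
  33 * ((s - L)^-1 - (s + 2 * L)^-1) <= (s - 49 * L)^-1 - (s + 50 * L)^-1.
Proof.
move=> L0 hs.
have D1 : 0 < (s - L) * (s + 2 * L) by case: hs => hs; nra.
have D2 : 0 < (s - 49 * L) * (s + 50 * L) by case: hs => hs; nra.
have -> : 33 * ((s - L)^-1 - (s + 2 * L)^-1) = (99 * L) / ((s - L) * (s + 2 * L)).
  by field; rewrite -negb_or -mulf_eq0 mulrC gt_eqF.
have -> : (s - 49 * L)^-1 - (s + 50 * L)^-1 = (99 * L) / ((s - 49 * L) * (s + 50 * L)).
  by field; rewrite -negb_or -mulf_eq0 mulrC gt_eqF.
by rewrite ler_pM2l ?lef_pV2 ?posrE //; nra.
Qed.

Section one_interval.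
Context {R : realType}.
Local Notation mu := (@lebesgue_measure R).
Variables (a b lam : R) (h g : R -> R).
Local Notation L := (b - a).
Hypotheses (ab : a < b) (lam_gt0 : 0 < lam).
Hypotheses (h_ge0 : forall y, 0 <= h y) (h_int : mu.-integrable setT (EFin \o h))
  (h_out : forall y, ~~ (a < y < b) -> h y = 0)
  (h_mass : lam * L <= Rintegral mu setT h <= 2 * lam * L).
Hypotheses (g_ge0 : forall y, 0 <= g y) (g_int : mu.-integrable setT (EFin \o g))
  (g_in : forall y : R, a - 50 * L < y < b + 50 * L -> g y = 0).

Let Q := cauchy_integral h.
Let P := cauchy_integral g.

Let L_gt0 : 0 < L. Proof. by rewrite subr_gt0. Qed.

Let h_near0 (x : R) : x < a \/ b < x -> \forall y \near x, h y = 0.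
Proof.
case=> [xa|bx].
  apply: (near_vanish_itv (c := x - 1) (e := a)); first by apply/andP; split; lra.
  by move=> y /andP[_ ya]; apply: h_out; apply/negP => /andP[]; lra.
apply: (near_vanish_itv (c := b) (e := x + 1)); first by apply/andP; split; lra.
by move=> y /andP[bY _]; apply: h_out; apply/negP => /andP[]; lra.
Qed.

Let g_near0 (x : R) : a - 50 * L < x < b + 50 * L -> \forall y \near x, g y = 0.
Proof. by move=> xI; exact: near_vanish_itv xI g_in. Qed.

Let Q_ge (x r : R) : x < a \/ b < x -> (forall y, a < y < b -> r <= (x - y)^-1) ->
  Rintegral mu setT h * r <= Q x.
Proof.
move=> xab r_le; rewrite -RintegralZr //.
apply: (le_Rintegral_weighted (A := fun y => a < y < b)) => //.
- by move=> y /negP; exact: h_out.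
- exact: integrableZr_EFin.
- exact: integrable_cauchy_kernel (h_near0 xab).
Qed.

Let Q_le (x r : R) : x < a \/ b < x -> (forall y, a < y < b -> (x - y)^-1 <= r) ->
  Q x <= Rintegral mu setT h * r.
Proof.
move=> xab le_r; rewrite -RintegralZr //.
apply: (le_Rintegral_weighted (A := fun y => a < y < b)) => //.
- by move=> y /negP; exact: h_out.
- exact: integrable_cauchy_kernel (h_near0 xab).
- exact: integrableZr_EFin.
Qed.

Let Q_ge_right_adjacent (x : R) : b < x < b + L -> lam / 2 <= Q x.
Proof.
move=> /andP[bx xb]; have L0 := L_gt0; have /andP[hm _] := h_mass.
apply: le_trans (Q_ge (r := (2 * L)^-1) _ _); last 2 first.
- by right.
- by move=> y /andP[ay yb]; rewrite lef_pV2 ?posrE; lra.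
by rewrite ler_pdivlMr; [nra|lra].
Qed.

Let Q_le_left_adjacent (x : R) : a - L < x < a -> Q x <= - (lam / 2).
Proof.
move=> /andP[ax xa]; have L0 := L_gt0; have /andP[hm _] := h_mass.
apply: le_trans (Q_le (r := - (2 * L)^-1) _ _) _.
- by left.
- by move=> y /andP[ay yb]; rewrite -[x - y]opprB invrN lerN2 lef_pV2 ?posrE; lra.
by rewrite mulrN lerN2 ler_pdivlMr; [nra|lra].
Qed.

Let Q_le_right_far (x : R) : b + 49 * L <= x -> Q x <= 2 * lam / 49.
Proof.
move=> bx; have L0 := L_gt0; have /andP[_ hM] := h_mass.
apply: le_trans (Q_le (r := (49 * L)^-1) _ _) _.
- by right; lra.
- by move=> y /andP[ay yb]; rewrite lef_pV2 ?posrE; lra.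
by rewrite ler_pdivrMr; [nra|lra].
Qed.

Let Q_ge_left_far (x : R) : x <= a - 49 * L -> - (2 * lam / 49) <= Q x.
Proof.
move=> xa; have L0 := L_gt0; have /andP[_ hM] := h_mass.
apply: le_trans (Q_ge (r := - (49 * L)^-1) _ _); last 2 first.
- by left; lra.
- by move=> y /andP[ay yb]; rewrite -[x - y]opprB invrN lerN2 lef_pV2 ?posrE; lra.
by rewrite mulrN lerN2 ler_pdivrMr; [nra|lra].
Qed.

Let P_antitone (x1 x2 : R) : a - 50 * L < x1 -> x1 < x2 -> x2 < b + 50 * L -> P x2 <= P x1.
Proof. exact: cauchy_integral_antitone g_ge0 g_int g_in. Qed.

Let P_spread : (P (a - L) - P (b + L)) * 33 <= P (a - 49 * L) - P (b + 49 * L).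
Proof.
have L0 := L_gt0.
have P_int x : a - 50 * L < x < b + 50 * L ->
    mu.-integrable setT (EFin \o (fun y => g y / (x - y))).
  by move=> xI; exact: integrable_cauchy_kernel (g_near0 xI).
have [iA iB iC iD] : [/\ mu.-integrable setT (EFin \o (fun y => g y / (a - L - y))),
    mu.-integrable setT (EFin \o (fun y => g y / (b + L - y))),
    mu.-integrable setT (EFin \o (fun y => g y / (a - 49 * L - y))) &
    mu.-integrable setT (EFin \o (fun y => g y / (b + 49 * L - y)))].
  by split; apply: P_int; apply/andP; split; lra.
rewrite /P /cauchy_integral -!RintegralB // -RintegralZr //; last exact: integrableB_EFin.
apply: le_Rintegral => //; [exact/integrableZr_EFin/integrableB_EFin|exact: integrableB_EFin|].
move=> y _; have [/andP[ya yb]|yout] := boolP (a - 50 * L < y < b + 50 * L).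
  by rewrite g_in ?mul0r ?subrr ?mul0r //; apply/andP; split.
have s_out : 50 * L <= a - y \/ a - y <= - (51 * L).
  by move: yout; rewrite negb_and -!leNgt => /orP[]; [left|right]; lra.
rewrite -!mulrBr -mulrA ler_wpM2l // mulrC.
rewrite (_ : a - L - y = a - y - L); last by ring.
rewrite (_ : b + L - y = a - y + 2 * L); last by ring.
rewrite (_ : a - 49 * L - y = a - y - 49 * L); last by ring.
rewrite (_ : b + 49 * L - y = a - y + 50 * L); last by ring.
exact: kernel_difference_spread.
Qed.

Let gap (x : R) := a - 50 * L < x < a \/ b < x < b + 50 * L.

Let hilbert_pv_gap (x : R) : gap x ->
  hilbert_pv (fun y => h y + g y) x (pi^-1 * (Q x + P x)).
Proof.
move=> gx; have L0 := L_gt0.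
have hx : \forall y \near x, h y = 0.
  by apply: h_near0; case: gx => /andP[? ?]; [left|right].
have gx0 : \forall y \near x, g y = 0.
  by apply: g_near0; case: gx => /andP[? ?]; apply/andP; split; lra.
suff -> : Q x + P x = cauchy_integral (fun y => h y + g y) x.
  by apply: hilbert_pv_cauchy_integral; apply: filterS2 hx gx0 => y -> ->; rewrite addr0.
rewrite /Q /P /cauchy_integral -RintegralD //; try exact: integrable_cauchy_kernel.
by apply: eq_Rintegral => y _; rewrite mulrDl.
Qed.

Let hilbert_large (x : R) : gap x -> pi * lam / 8 <= `|Q x + P x| ->
  exists Lv, hilbert_pv (fun y => h y + g y) x Lv /\ lam / 8 <= `|Lv|.
Proof.
move=> gx QP; exists (pi^-1 * (Q x + P x)); split; first exact: hilbert_pv_gap.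
by rewrite normrM ger0_norm ?invr_ge0 ?pi_ge0 // ler_pdivlMl ?pi_gt0 //; lra.
Qed.

Let good_shift (j : int) := forall x : R, a + j%:~R * L < x < b + j%:~R * L ->
  gap x /\ pi * lam / 8 <= `|Q x + P x|.

Let good_shift_1 : pi * lam / 8 - lam / 2 <= P (b + L) -> good_shift 1.
Proof.
move=> Pb x; rewrite mul1r => /andP[x1 x2]; have L0 := L_gt0.
split; first by right; apply/andP; split; lra.
have Qx : lam / 2 <= Q x by apply: Q_ge_right_adjacent; apply/andP; split; lra.
have Px : P (b + L) <= P x by apply: P_antitone; lra.
by rewrite (le_trans _ (ler_norm _)) //; lra.
Qed.

Let good_shift_N1 : P (a - L) <= lam / 2 - pi * lam / 8 -> good_shift (-1).
Proof.
move=> Pa x; rewrite mulN1r => /andP[x1 x2]; have L0 := L_gt0.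
split; first by left; apply/andP; split; lra.
have Qx : Q x <= - (lam / 2) by apply: Q_le_left_adjacent; apply/andP; split; lra.
have Px : P x <= P (a - L) by apply: P_antitone; lra.
by rewrite -normrN (le_trans _ (ler_norm _)) //; lra.
Qed.

Let good_shift_50 : P (b + 49 * L) <= - (pi * lam / 8 + 2 * lam / 49) -> good_shift 50.
Proof.
move=> Pb x /andP[x1 x2]; have L0 := L_gt0.
split; first by right; apply/andP; split; lra.
have Qx : Q x <= 2 * lam / 49 by apply: Q_le_right_far; lra.
have Px : P x <= P (b + 49 * L) by apply: P_antitone; lra.
by rewrite -normrN (le_trans _ (ler_norm _)) //; lra.
Qed.

Let good_shift_N50 : pi * lam / 8 + 2 * lam / 49 <= P (a - 49 * L) -> good_shift (-50).
Proof.
move=> Pa x; rewrite mulNr => /andP[x1 x2]; have L0 := L_gt0.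
split; first by left; apply/andP; split; lra.
have Qx : - (2 * lam / 49) <= Q x by apply: Q_ge_left_far; lra.
have Px : P (a - 49 * L) <= P x by apply: P_antitone; lra.
by rewrite (le_trans _ (ler_norm _)) //; lra.
Qed.

Let good_shift_exists : exists j : int, ((-50 <= j <= 50) /\ j != 0) /\ good_shift j.
Proof.
have [P1|P1] := lerP (pi * lam / 8 - lam / 2) (P (b + L)).
  by exists 1; split; [|exact: good_shift_1].
have [P2|P2] := lerP (P (a - L)) (lam / 2 - pi * lam / 8).
  by exists (-1); split; [|exact: good_shift_N1].
have [P3|P3] := lerP (P (b + 49 * L)) (- (pi * lam / 8 + 2 * lam / 49)).
  by exists 50; split; [|exact: good_shift_50].
have [P4|P4] := lerP (pi * lam / 8 + 2 * lam / 49) (P (a - 49 * L)).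
  by exists (-50); split; [|exact: good_shift_N50].
have pi_lam : pi * lam < 7 / 2 * lam by rewrite ltr_pM2r ?pi_lt_7_2.
(* lra ignores section hypotheses. *)
have lam0 : 0 < lam := lam_gt0.
by have := P_spread; lra.
Qed.

Lemma exists_shift_hilbert_ge : exists j : int, ((-50 <= j <= 50) /\ j != 0) /\
  forall x, itv_set (itv_shift (a, b) j) x ->
    exists Lv, hilbert_pv (fun y => h y + g y) x Lv /\ lam / 8 <= `|Lv|.
Proof.
have [j [jr good_j]] := good_shift_exists; exists j; split => // x.
rewrite /itv_set /itv_shift /itv_len /= in_itv /= => /good_j[gx QP].
exact: hilbert_large.
Qed.

End one_interval.

Section interval_families.
Context {R : realType}.
Local Notation mu := (@lebesgue_measure R).

Lemma itv_setE (I : R * R) (y : R) : itv_set I y = (I.1 < y < I.2).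
Proof. by rewrite /itv_set /= in_itv. Qed.

Lemma itv_dilate101E (I : R * R) :
  itv_set (itv_dilate 101 I) = itv_set (I.1 - 50 * itv_len I, I.2 + 50 * itv_len I).
Proof. by rewrite /itv_dilate /itv_len; congr (itv_set (_, _)); field. Qed.

Lemma itv_set_sub_dilate101 (I : R * R) : itv_set I `<=` itv_set (itv_dilate 101 I).
Proof.
move=> y; rewrite itv_dilate101E !itv_setE /itv_len /= => /andP[? ?].
by apply/andP; split; lra.
Qed.

Lemma bigcup_itv_sub_segment (m : nat) (I : 'I_m -> R * R) :
  exists c e, \bigcup_(i in [set: 'I_m]) itv_set (I i) `<=` `[c, e].
Proof.
pose M := \sum_(k < m) (`|(I k).1| + `|(I k).2|); exists (- M), M.
move=> y [k _]; rewrite itv_setE => /andP[y1 y2].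
have Mk : `|(I k).1| + `|(I k).2| <= M.
  by rewrite /M (bigD1 k) //= lerDl sumr_ge0 // => j _; rewrite addr_ge0.
have := lerNnormlW (lexx `|(I k).1|); have := ler_norm (I k).2.
have := normr_ge0 (I k).1; have := normr_ge0 (I k).2.
by move=> *; rewrite /= in_itv /=; apply/andP; split; lra.
Qed.

Lemma integrable_indic_mul (f : R -> R) (A : set R) (c e : R) :
  locally_integrable setT f -> measurable A -> A `<=` `[c, e] ->
  mu.-integrable setT (EFin \o (fun y => \1_A y * f y)).
Proof.
move=> [mf _ fK] mA Ace.
have f_ce : mu.-integrable setT ((EFin \o f) \_ `[c, e]).
  rewrite -integrable_mkcond //; apply/integrableP; split.
    by apply/measurable_EFinP; apply: measurable_funS mf.
  by apply: fK => //; exact: segment_compact.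
have bA : [bounded (\1_A y : R) | y in setT].
  exists 1; split; first exact: num_real.
  move=> M M1 y _; apply: le_trans (ltW M1).
  by rewrite indicE; case: (y \in A); rewrite ?normr1 ?normr0.
have := integrableMl measurableT f_ce (measurable_indic mA) bA.
apply: eq_integrable => // y _; rewrite /= patchE indicE.
case: (boolP (y \in A)) => yA; last by rewrite /= mul0r mule0.
by rewrite mem_set ?mul1r ?mule1 //; apply: Ace; exact/set_mem.
Qed.

Lemma indic_bigcup_well_separated (m : nat) (I : 'I_m -> R * R) (i : 'I_m) (y : R) :
  well_separated I -> itv_set (itv_dilate 101 (I i)) y ->
  \1_(\bigcup_(k in [set: 'I_m]) itv_set (I k)) y = \1_(itv_set (I i)) y :> R.
Proof.
move=> ws yi; rewrite !indicE.
suff -> : (y \in \bigcup_(k in [set: 'I_m]) itv_set (I k)) = (y \in itv_set (I i)) by [].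
apply/idP/idP => [|/set_mem yIi]; last by apply/mem_set; exists i.
move=> /set_mem[k _ yk]; apply/mem_set; have [<- //|ki] := eqVneq k i.
have : (itv_set (itv_dilate 101 (I k)) `&` itv_set (itv_dilate 101 (I i))) y.
  by split => //; exact: itv_set_sub_dilate101.
by rewrite (ws k i ki).
Qed.

End interval_families.

Section well_separated_family.
Context {R : realType}.
Local Notation mu := (@lebesgue_measure R).
Variables (f : R -> R) (lam : R) (m : nat) (I : 'I_m -> R * R).
Hypotheses (f_ge0 : forall y, 0 <= f y) (f_loc : locally_integrable setT f).
Hypotheses (lam_gt0 : 0 < lam) (ws : well_separated I).
Local Notation U := (\bigcup_(k in [set: 'I_m]) itv_set (I k)).

Lemma well_separated_exists_shift (i : 'I_m) : is_itv (I i) ->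
  lam <= Rintegral mu (itv_set (I i)) f / itv_len (I i) <= 2 * lam ->
  exists j : int, ((-50 <= j <= 50) /\ j != 0) /\
    forall x, itv_set (itv_shift (I i) j) x ->
      exists L, hilbert_pv (fun y => \1_U y * f y) x L /\ lam / 8 <= `|L|.
Proof.
move=> Ii /andP[hI1 hI2].
have len_gt0 : 0 < itv_len (I i) by rewrite subr_gt0.
have mU : measurable U.
  by apply: open_measurable; apply: bigcup_open => k _; exact: itv_open.
have [c [e Uce]] := bigcup_itv_sub_segment I.
pose h y := \1_(itv_set (I i)) y * f y.
have h_int : mu.-integrable setT (EFin \o h).
  apply: (integrable_indic_mul (c := (I i).1) (e := (I i).2)) f_loc _ _.
    exact: measurable_itv.
  by move=> y; rewrite itv_setE /= in_itv /= => /andP[? ?]; apply/andP; split; apply: ltW.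
have h_mass : Rintegral mu setT h = Rintegral mu (itv_set (I i)) f.
  by rewrite [RHS]Rintegral_mkcond patch_indic; apply: eq_Rintegral => y _; rewrite mulrC.
have h_le y : h y <= \1_U y * f y.
  rewrite ler_wpM2r // !indicE; case: (boolP (y \in itv_set (I i))) => // /set_mem yIi.
  by rewrite mem_set //; exists i.
have -> : (fun y => \1_U y * f y) = (fun y => h y + (\1_U y * f y - h y)).
  by apply/funext => y; rewrite addrC subrK.
have := @exists_shift_hilbert_ge R (I i).1 (I i).2 lam h (fun y => \1_U y * f y - h y).
rewrite -surjective_pairing; apply => //.
- by move=> y; rewrite mulr_ge0 // indicE ler0n.
- move=> y yIi; rewrite /h indicE memNset; first by rewrite mul0r.
  by rewrite itv_setE; exact/negP.
- by rewrite h_mass; move: hI1 hI2; rewrite ler_pdivlMr // ler_pdivrMr // => -> ->.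
- by move=> y; rewrite subr_ge0.
- exact: integrableB_EFin (integrable_indic_mul f_loc mU Uce) h_int.
- move=> y yI; rewrite /h (indic_bigcup_well_separated (i := i) ws) ?subrr //.
  by rewrite itv_dilate101E itv_setE.
Qed.

End well_separated_family.

Unset Implicit Arguments.

Theorem lemma3p8 (R : realType) (f : R -> R) (lambda : R) (m : nat)
    (I : 'I_m -> R * R) :
  (forall y, 0 <= f y) ->
  locally_integrable setT f ->
  0 < lambda ->
  (forall i, is_itv (I i)) ->
  well_separated I ->
  (forall i, lambda <= Rintegral lebesgue_measure (itv_set (I i)) f / itv_len (I i)
                    <= 2 * lambda) ->
  let U := \bigcup_(i in [set: 'I_m]) itv_set (I i) in
  let g := fun y => \1_U y * f y in
  exists J : 'I_m -> int,
    (forall i, (-50 <= J i <= 50)%R /\ J i != 0) /\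
    forall x, (\bigcup_(i in [set: 'I_m]) itv_set (itv_shift (I i) (J i))) x ->
      exists L, hilbert_pv g x L /\ lambda / 8 <= `|L|.
Proof.
move=> f_ge0 f_loc lam_gt0 I_itv ws hI U g.
have [J HJ] := choice (fun i =>
  well_separated_exists_shift f_ge0 f_loc lam_gt0 ws (I_itv i) (hI i)).
exists J; split => [i|x [i _ xi]]; first exact: (HJ i).1.
exact: (HJ i).2.
Qed.
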